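(* Let $\mathbf v\in\mathbb Z^4$ be nonzero and suppose the orbit $\mathcal A[\mathbf v]=\{\mathbf U\mathbf v:\mathbf U\in\mathcal A\}$ contains a root quadruple $\mathbf a$. Then: (1) $\mathbf a$ is the unique reduced quadruple in $\mathcal A[\mathbf v]$; (2) all values $L(\mathbf x)$, $\mathbf x\in\mathcal A[\mathbf v]$, are nonzero and have the same sign, and if this sign is positive, then the general reduction algorithm started from any $\mathbf x\in\mathcal A[\mathbf v]$ applies only $\mathbf S_4$ (to the quadruple ordered increasingly) until the root quadruple is reached.
   Context: $\mathbf S_1,\dots,\mathbf S_4$ are the $4\times4$ integer matrices acting on column vectors $(a_1,a_2,a_3,a_4)^T$ by replacing the $i$-th coordinate $a_i$ with $2\sum_{j\ne i}a_j-a_i$, other coordinates fixed. The Apollonian group $\mathcal A$ is the subgroup of $GL(4,\mathbb Z)$ generated by $\mathbf S_1,\dots,\mathbf S_4$. For $\mathbf v=(a,b,c,d)$, $|\mathbf v|=|a|+|b|+|c|+|d|$ and $L(\mathbf v)=a+b+c+d$. General reduction algorithm: order the quadruple increasingly, then apply the first $\mathbf S_i$ ($i=1,2,3,4$ in order) that strictly decreases $|\mathbf v|$, and repeat; halt when no $\mathbf S_i$ strictly decreases $|\mathbf v|$. A quadruple is reduced if no $\mathbf S_i$ strictly decreases $|\mathbf v|$. A reduced quadruple $\mathbf a$, ordered as $a\le b\le c\le d$, with $L(\mathbf a)\ge0$ is a root quadruple if $a+b+c\ge d>0$; a reduced $\mathbf a$ with $L(\mathbf a)<0$ is a root quadruple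 if $(-d,-c,-b,-a)$ is one. *)

From HB Require Import structures.
From mathcomp Require Import all_boot all_order all_algebra.
Set Implicit Arguments. Unset Strict Implicit. Unset Printing Implicit Defensive.
Import Order.TTheory GRing.Theory Num.Theory.
Local Open Scope ring_scope.

Notation quad := ('cV[int]_4).

(* S_i (i : 'I_4; the paper's S_1..S_4 are i = 0..3): replaces a_i by
   2 * sum_{j <> i} a_j - a_i, other coordinates fixed. *)
Definition Smx (i : 'I_4) : 'M[int]_4 :=
  \matrix_(r < 4, c < 4)
    (if r == i then (if c == i then -1 else 2) else (if r == c then 1 else 0)).

Inductive in_A : 'M[int]_4 -> Prop :=
  | in_A_gen (i : 'I_4) : in_A (Smx i)
  | in_A_one : in_A 1%:M
  | in_A_mul (U V : 'M[int]_4) : in_A U -> in_A V -> in_A (U *m V)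
  | in_A_inv (U : 'M[int]_4) : in_A U -> in_A (invmx U).

Definition in_Aorbit (v x : quad) : Prop := exists U, in_A U /\ x = U *m v.

Definition qnorm (v : quad) : int := \sum_(i < 4) `|v i 0|.
Definition qL (v : quad) : int := \sum_(i < 4) v i 0.

Definition sortq (v : quad) : quad :=
  \col_(i < 4) nth 0 (sort <=%R [seq v j 0 | j <- enum 'I_4]) i.

Definition decreases (v : quad) (i : 'I_4) : bool := qnorm (Smx i *m v) < qnorm v.

Definition reduced (v : quad) : Prop := forall i : 'I_4, ~~ decreases v i.

Definition i0 : 'I_4 := @Ordinal 4 0 isT.
Definition i1 : 'I_4 := @Ordinal 4 1 isT.
Definition i2 : 'I_4 := @Ordinal 4 2 isT.
Definition i3 : 'I_4 := @Ordinal 4 3 isT.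

Definition root_pos (v : quad) : Prop :=
  let w := sortq v in
  reduced v /\ 0 <= qL v /\ w i3 0 <= w i0 0 + w i1 0 + w i2 0 /\ 0 < w i3 0.

Definition quad_of (a b c d : int) : quad :=
  \col_(i < 4) nth 0 [:: a; b; c; d] i.

Definition is_root (v : quad) : Prop :=
  if 0 <= qL v then root_pos v
  else reduced v /\
       (let w := sortq v in
        root_pos (quad_of (- w i3 0) (- w i2 0) (- w i1 0) (- w i0 0))).

Definition red_step (v : quad) : option ('I_4 * quad) :=
  let w := sortq v in
  let k := find (decreases w) (enum 'I_4) in
  if (k < 4)%N then Some (inord k, Smx (inord k) *m w) else None.

(* red_run x s r : the algorithm started from x applies the S-indices s
   in this order and halts with the (ordered) quadruple r. *)
Inductive red_run : quad -> seq 'I_4 -> quad -> Prop :=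
  | red_halt (v : quad) : red_step v = None -> red_run v [::] (sortq v)
  | red_move (v v' r : quad) (i : 'I_4) (s : seq 'I_4) :
      red_step v = Some (i, v') -> red_run v' s r -> red_run v (i :: s) r.

From HB Require Import structures.
From mathcomp Require Import all_boot all_order all_algebra.
From mathcomp Require Import fingroup perm zify ring.
Import Order.TTheory GRing.Theory Num.Theory.
Local Open Scope ring_scope.

(* Write e_k(x) = L(x) - 2 x_k: the move S_k adds 2 e_k(x) to x_k, hence to
   L(x).  A root r with L(r) > 0 has every e_k(r) >= 0.  The quadruples
   reached from r by non-backtracking words in the S_k form a tree, and a
   non-root vertex x whose last letter is S_i satisfies
     e_i(x) < 0 < L(x) + e_i(x)  and  e_k(x) + e_i(x) >= 0 for k <> i.
   These inequalities make S_i the only move decreasing |x|, and they are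
   preserved by every move S_j with j <> i.  So the tree is closed under all
   S_j and contains the whole orbit: r is its only reduced element, L > 0 on
   it, and, as e_k(x) is smallest at the largest entry of x, the reduction
   algorithm always applies S_4 to the ordered quadruple.  The case L(r) < 0
   is reduced to this one by x |-> -x. *)

Definition qexcess (x : quad) (k : 'I_4) : int := qL x - 2 * x k 0.

Lemma sumr_update (I : finType) (R : zmodType) (j : I) (f g : I -> R) :
  (forall k, k != j -> f k = g k) -> \sum_k f k = \sum_k g k + (f j - g j).
Proof.
move=> fg; rewrite (bigD1 j) //= [in RHS](bigD1 j) //= (eq_bigr g) //.
by rewrite [RHS]addrC addrA subrK.
Qed.

Implicit Types (x y : quad) (p : 'S_4) (i j k : 'I_4).

Lemma sum4 (R : nmodType) (f : 'I_4 -> R) :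
  \sum_i f i = f i0 + f i1 + f i2 + f i3.
Proof.
rewrite !big_ord_recl big_ord0 addr0 !addrA.
by congr (_ + _ + _ + _); congr f; apply: val_inj.
Qed.

Lemma enum_ord4 : enum 'I_4 = [:: i0; i1; i2; i3].
Proof. by apply: (inj_map val_inj); rewrite val_enum_ord. Qed.

Lemma Smx_mulE j (x : quad) k :
  (Smx j *m x) k 0 = if k == j then x j 0 + 2 * qexcess x j else x k 0.
Proof.
rewrite mxE; under eq_bigr do rewrite mxE.
have [_ | kj] := eqVneq k j.
  rewrite /qexcess /qL (bigD1 j) //= [in RHS](bigD1 j) //= eqxx.
  rewrite (eq_bigr (fun c => 2 * x c 0)) => [|c /negbTE-> //].
  by rewrite -mulr_sumr; ring.
rewrite (bigD1 k) //= eqxx big1 ?addr0 ?mul1r // => c ck.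
by rewrite eq_sym (negbTE ck) mul0r.
Qed.

Lemma qL_Smx j x : qL (Smx j *m x) = qL x + 2 * qexcess x j.
Proof.
rewrite /qL (@sumr_update _ _ j _ (fun k => x k 0)) => [|k /negbTE kj].
  by rewrite Smx_mulE eqxx addrAC subrr add0r.
by rewrite Smx_mulE kj.
Qed.

Lemma qnorm_Smx j x :
  qnorm (Smx j *m x) = qnorm x + (`|x j 0 + 2 * qexcess x j| - `|x j 0|).
Proof.
rewrite /qnorm (@sumr_update _ _ j _ (fun k => `|x k 0|)) => [|k /negbTE kj].
  by rewrite Smx_mulE eqxx.
by rewrite Smx_mulE kj.
Qed.

Lemma qexcess_Smx j x k :
  qexcess (Smx j *m x) k =
  if k == j then - qexcess x j else qexcess x k + 2 * qexcess x j.
Proof.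
rewrite {1}/qexcess qL_Smx Smx_mulE.
by case: eqVneq => [_|_]; rewrite /qexcess; ring.
Qed.

Lemma SmxK j : cancel (mulmx (Smx j)) (mulmx (Smx j) : quad -> quad).
Proof.
move=> x; apply/matrixP => k l; rewrite (ord1 l) Smx_mulE qexcess_Smx !Smx_mulE.
rewrite eqxx; case: eqVneq => [->|_] //; ring.
Qed.

Lemma Smx_mulmx_id j x : qexcess x j = 0 -> Smx j *m x = x.
Proof.
move=> e0; apply/matrixP => k l; rewrite (ord1 l) Smx_mulE e0.
by case: eqVneq => [->|//]; rewrite mulr0 addr0.
Qed.

Lemma Smx_invol j : Smx j *m Smx j = 1%:M.
Proof.
apply/matrixP => r c; have /matrixP/(_ r 0) := SmxK j (delta_mx c 0).
by rewrite mulmxA -colE !mxE andbT.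
Qed.

Lemma decreasesE x j :
  decreases x j = (`|x j 0 + 2 * qexcess x j| < `|x j 0|).
Proof. by rewrite /decreases qnorm_Smx gtrDl subr_lt0. Qed.

Lemma decreases_excess x j :
  0 < qL x + qexcess x j -> decreases x j = (qexcess x j < 0).
Proof. by rewrite decreasesE /qexcess => L_gt0; apply/idP/idP; lia. Qed.

Lemma qLN x : qL (- x) = - qL x.
Proof. by rewrite /qL -sumrN; apply: eq_bigr => i _; rewrite mxE. Qed.

Lemma reducedN x : reduced x -> reduced (- x).
Proof.
have qnormN (y : quad) : qnorm (- y) = qnorm y.
  by apply: eq_bigr => i _; rewrite mxE normrN.
by move=> red_x j; rewrite /decreases mulmxN !qnormN; apply: red_x.
Qed.

Lemma in_A_unitmx {U} : in_A U -> U \in unitmx.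
Proof.
elim=> {U} [i | | U V _ uU _ uV | U _ uU].
- by case: (mulmx1_unit (Smx_invol i)).
- exact: unitmx1.
- by rewrite unitmx_mul uU uV.
- by rewrite unitmx_inv.
Qed.

Section Invariant.

Variable P : quad -> Prop.
Hypothesis P_Smx : forall j x, P x -> P (Smx j *m x).

Lemma in_A_invariant {U} :
  in_A U -> forall x, P x -> P (U *m x) /\ P (invmx U *m x).
Proof.
elim=> {U} [i | | U V AU IHU AV IHV | U _ IHU] x Px.
- have uS := in_A_unitmx (in_A_gen i).
  by rewrite -{2}(SmxK i x) mulKmx //; split; apply: P_Smx.
- by rewrite invmx1 mul1mx.
- have [uU uV] := (in_A_unitmx AU, in_A_unitmx AV).
  split; first by rewrite -mulmxA; apply: (IHU _ (IHV _ Px).1).1.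
  have -> : invmx (U *m V) *m x = invmx V *m (invmx U *m x).
    rewrite -{1}[x](mulKVmx uU) -{1}(mulKVmx uV (invmx U *m x)) (mulmxA U V).
    by rewrite mulKmx // unitmx_mul uU uV.
  exact: (IHV _ (IHU _ Px).2).2.
- by rewrite invmxK; case: (IHU x Px).
Qed.

Lemma orbit_invariant {v r x} : in_Aorbit v r -> in_Aorbit v x -> P r -> P x.
Proof.
move=> [U [AU ->]] [W [AW ->]] PUv.
have Pv : P v.
  by rewrite -(mulKmx (in_A_unitmx AU) v); apply: (in_A_invariant AU _ PUv).2.
exact: (in_A_invariant AW _ Pv).1.
Qed.

End Invariant.

Definition positive_root (x : quad) : Prop :=
  0 < qL x /\ forall k, 0 <= qexcess x k.

(* [branch i x]: x is a vertex of the tree other than its root, and its parent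
   is [Smx i *m x]. *)
Definition branch (i : 'I_4) (x : quad) : Prop :=
  [/\ qexcess x i < 0, 0 < qL x + qexcess x i
    & forall k, k != i -> 0 <= qexcess x k + qexcess x i].

Lemma branch_qL_gt0 {i x} : branch i x -> 0 < qL x.
Proof. by case=> ? ? _; lia. Qed.

Lemma branch_excess_gt0 {i x k} : branch i x -> k != i -> 0 < qexcess x k.
Proof. by case=> ? _ e_ge /e_ge; lia. Qed.

Lemma branch_decreases {i x} : branch i x -> decreases x i.
Proof. by case=> ? ? _; rewrite decreases_excess. Qed.

Lemma branch_ndecreases {i x k} : branch i x -> k != i -> ~~ decreases x k.
Proof.
move=> bx ki; have ek := branch_excess_gt0 bx ki.
by have L_gt0 := branch_qL_gt0 bx; rewrite decreases_excess; lia.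
Qed.

Lemma positive_root_reduced x : positive_root x -> reduced x.
Proof.
by case=> L_gt0 e_ge0 k; have ek := e_ge0 k; rewrite decreases_excess; lia.
Qed.

Lemma positive_root_Smx {j x} :
  positive_root x -> 0 < qexcess x j -> branch j (Smx j *m x).
Proof.
case=> L_gt0 e_ge0 ej; split.
- by rewrite qexcess_Smx eqxx; lia.
- by rewrite qL_Smx qexcess_Smx eqxx; lia.
- by move=> k kj; rewrite !qexcess_Smx eqxx (negbTE kj); have := e_ge0 k; lia.
Qed.

Lemma branch_Smx {i j x} : branch i x -> j != i -> branch j (Smx j *m x).
Proof.
move=> bx ji; have ej := branch_excess_gt0 bx ji; have [ei L_gt0 e_ge] := bx.
split.
- by rewrite qexcess_Smx eqxx; lia.
- by rewrite qL_Smx qexcess_Smx eqxx; lia.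
- move=> k kj; rewrite !qexcess_Smx eqxx (negbTE kj).
  have [-> | ki] := eqVneq k i; first by have := e_ge _ ji; lia.
  by have := branch_excess_gt0 bx ki; lia.
Qed.

Inductive apollonian_tree (r : quad) : quad -> Prop :=
  | tree_root : apollonian_tree r r
  | tree_branch i x :
      branch i x -> apollonian_tree r (Smx i *m x) -> apollonian_tree r x.
Arguments tree_root {r}.
Arguments tree_branch {r i x}.

Section Tree.

Context {r : quad} (r_root : positive_root r).

Lemma tree_cases x : apollonian_tree r x -> x = r \/ exists i, branch i x.
Proof. by case=> [|i y yb _]; [left | right; exists i]. Qed.

Lemma tree_qL_gt0 x : apollonian_tree r x -> 0 < qL x.
Proof. by case/tree_cases => [-> | [i /branch_qL_gt0]] //; case: r_root. Qed.

Lemma tree_reduced x : apollonian_tree r x -> reduced x -> x = r.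
Proof.
by case/tree_cases => [// | [i bx]] /(_ i); rewrite branch_decreases.
Qed.

Lemma tree_Smx j x : apollonian_tree r x -> apollonian_tree r (Smx j *m x).
Proof.
case=> [| i y yb ty].
- have [_ /(_ j)] := r_root; rewrite le0r => /orP[/eqP e0 | ej].
    by rewrite Smx_mulmx_id //; apply: tree_root.
  apply: (tree_branch (positive_root_Smx r_root ej)).
  by rewrite SmxK; apply: tree_root.
- have [-> // | ji] := eqVneq j i.
  apply: (tree_branch (branch_Smx yb ji)).
  by rewrite SmxK; apply: tree_branch ty.
Qed.

Lemma orbit_tree {v x} : in_Aorbit v r -> in_Aorbit v x -> apollonian_tree r x.
Proof.
by move=> vr vx; apply: (orbit_invariant _ tree_Smx vr vx); apply: tree_root.
Qed.

End Tree.

Lemma sum_row_perm (R : nmodType) p (f : int -> R) x :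
  \sum_k f (row_perm p x k 0) = \sum_k f (x k 0).
Proof.
rewrite [RHS](reindex_inj (@perm_inj _ p)); apply: eq_bigr => k _.
by rewrite mxE.
Qed.

Lemma qL_row_perm p x : qL (row_perm p x) = qL x.
Proof. exact: (sum_row_perm _ p id). Qed.

Lemma qnorm_row_perm p x : qnorm (row_perm p x) = qnorm x.
Proof. exact: (sum_row_perm _ p Num.norm). Qed.

Lemma qexcess_row_perm p x k : qexcess (row_perm p x) k = qexcess x (p k).
Proof. by rewrite /qexcess qL_row_perm mxE. Qed.

Lemma Smx_row_perm p j x :
  Smx j *m row_perm p x = row_perm p (Smx (p j) *m x).
Proof.
apply/matrixP => k l; rewrite (ord1 l) Smx_mulE [RHS]mxE Smx_mulE.
by rewrite (inj_eq perm_inj) qexcess_row_perm !mxE.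
Qed.

Lemma decreases_row_perm p x j :
  decreases (row_perm p x) j = decreases x (p j).
Proof. by rewrite /decreases Smx_row_perm !qnorm_row_perm. Qed.

Lemma reduced_row_perm p x : reduced x -> reduced (row_perm p x).
Proof. by move=> red_x k; rewrite decreases_row_perm. Qed.

Lemma branch_row_perm p j x : branch (p j) x -> branch j (row_perm p x).
Proof.
case=> ej L_gt0 e_ge; split; rewrite ?qL_row_perm ?qexcess_row_perm //.
move=> k kj; rewrite !qexcess_row_perm.
by apply: e_ge; rewrite (inj_eq perm_inj).
Qed.

Lemma positive_root_row_perm p x :
  positive_root (row_perm p x) -> positive_root x.
Proof.
case; rewrite qL_row_perm => L_gt0 e_ge0; split=> // k.
by have := e_ge0 (p^-1 k)%g; rewrite qexcess_row_perm permKV.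
Qed.

Lemma sortq_row_perm p x : sortq (row_perm p x) = sortq x.
Proof.
suff /perm_sort_leP sort_eq :
  perm_eq [seq row_perm p x k 0 | k <- enum 'I_4] [seq x k 0 | k <- enum 'I_4].
  by rewrite /sortq sort_eq.
have -> : [seq row_perm p x k 0 | k <- enum 'I_4]
          = [seq x k 0 | k <- map p (enum 'I_4)].
  by rewrite -[in RHS]map_comp; apply: eq_map => k; rewrite mxE.
apply: perm_map; apply: uniq_perm => [||k].
- by rewrite map_inj_uniq ?enum_uniq //; apply: perm_inj.
- exact: enum_uniq.
- by rewrite mem_enum; apply/mapP; exists (p^-1 k)%g; rewrite ?mem_enum ?permKV.
Qed.

Lemma sortq_is_row_perm x : exists p : 'S_4, sortq x = row_perm p x.
Proof.
have : perm_eq (sort <=%R [seq x j 0 | j <- enum 'I_4]) [tuple x j 0 | j < 4].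
  by rewrite perm_sort /mktuple.
case/tuple_permP => p sorted_x; exists p; apply/matrixP => m l.
by rewrite (ord1 l) !mxE sorted_x nth_mktuple tnth_mktuple.
Qed.

Lemma sortq_le_max x k : sortq x k 0 <= sortq x i3 0.
Proof.
rewrite !mxE; apply: (sorted_leq_nth le_trans lexx) => //.
- by apply: sort_sorted; apply: le_total.
- by rewrite inE size_sort size_map size_enum_ord.
- by rewrite inE size_sort size_map size_enum_ord.
- by rewrite -ltnS.
Qed.

Lemma positive_root_of_max (w : quad) :
  (forall k, w k 0 <= w i3 0) -> w i3 0 <= w i0 0 + w i1 0 + w i2 0 ->
  0 < w i3 0 -> positive_root w.
Proof.
move=> le_max le_sum max_gt0.
have L4 : qL w = w i0 0 + w i1 0 + w i2 0 + w i3 0 by rewrite /qL sum4.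
by split=> [|k]; rewrite ?/qexcess L4; [lia | have := le_max k; lia].
Qed.

Lemma root_pos_positive_root x : root_pos x -> positive_root x.
Proof.
case=> _ [_ [le_sum max_gt0]]; have [p sx] := sortq_is_row_perm x.
apply: (positive_root_row_perm p); rewrite -sx.
by apply: positive_root_of_max => // k; apply: sortq_le_max.
Qed.

Lemma negative_root {a} :
  qL a < 0 -> is_root a -> reduced a /\ positive_root (- a).
Proof.
rewrite /is_root => L_lt0; rewrite lt_geF //.
move=> -[red_a /root_pos_positive_root].
have [p ->] := sortq_is_row_perm a.
set rev4 := perm (@rev_ord_inj 4).
have -> : quad_of (- row_perm p a i3 0) (- row_perm p a i2 0)
                  (- row_perm p a i1 0) (- row_perm p a i0 0)
          = row_perm (rev4 * p)%g (- a).
  apply/matrixP => m l; rewrite (ord1 l) row_permM !mxE permE.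
  by case: m => [[|[|[|[|m]]]] hm] //=; congr (- a (p _) 0); apply: val_inj.
by move/positive_root_row_perm.
Qed.

Lemma red_step_reduced y : reduced (sortq y) -> red_step y = None.
Proof. by move=> red_y; rewrite /red_step enum_ord4 /= !(negbTE (red_y _)). Qed.

Lemma red_step_branch y :
  branch i3 (sortq y) -> red_step y = Some (i3, Smx i3 *m sortq y).
Proof.
move=> b; have nd k : k != i3 -> decreases (sortq y) k = false.
  by move/(branch_ndecreases b)/negbTE.
rewrite /red_step enum_ord4 /= (branch_decreases b) !nd //.
by have -> : inord 3 = i3 by apply: val_inj; rewrite /= inordK.
Qed.

Lemma branch_sortq_i3 {y j} : branch j (sortq y) -> j = i3.
Proof.
move=> b; have [// | j3] := eqVneq j i3.
have e3 : 0 < qexcess (sortq y) i3.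
  by apply: (branch_excess_gt0 b); rewrite eq_sym.
case: b => ej _ _; have := sortq_le_max y j; rewrite /qexcess in e3 ej; lia.
Qed.

Lemma tree_red_run {r x} : positive_root r -> apollonian_tree r x ->
  forall p, exists s, red_run (row_perm p x) s (sortq r) /\ all (pred1 i3) s.
Proof.
move=> r_root; elim=> {x} [| i x bx _ IH] p.
  exists [::]; split=> //; rewrite -(sortq_row_perm p r).
  apply/red_halt/red_step_reduced.
  have [q ->] := sortq_is_row_perm (row_perm p r); rewrite -row_permM.
  by apply/reduced_row_perm/positive_root_reduced.
have [q] := sortq_is_row_perm (row_perm p x); rewrite -row_permM.
set t := (q * p)%g => sx.
have b : branch (t^-1 i)%g (sortq (row_perm p x)).
  by rewrite sx; apply: branch_row_perm; rewrite permKV.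
have t3 := branch_sortq_i3 b; rewrite t3 in b.
have [s [run_s all_s]] := IH t.
exists (i3 :: s); split; last by rewrite /= ?eqxx.
apply: red_move run_s; rewrite red_step_branch // sx Smx_row_perm.
by rewrite -t3 permKV.
Qed.

Lemma in_AorbitN {v x} : in_Aorbit v x -> in_Aorbit (- v) (- x).
Proof. by case=> U [AU ->]; exists U; rewrite mulmxN. Qed.

Theorem theorem3p2 (v a : quad) :
  v != 0 -> in_Aorbit v a -> is_root a ->
  (* (1) a is the unique reduced quadruple in the orbit *)
  (reduced a /\ forall b : quad, in_Aorbit v b -> reduced b -> b = a) /\
  (* (2) all L(x) nonzero with a common sign *)
  ((forall x : quad, in_Aorbit v x -> 0 < qL x) \/
   (forall x : quad, in_Aorbit v x -> qL x < 0)) /\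
  (* ... and if positive, the algorithm applies only S_4 and ends at the root *)
  ((forall x : quad, in_Aorbit v x -> 0 < qL x) ->
   forall x : quad, in_Aorbit v x ->
     exists s : seq 'I_4, red_run x s (sortq a) /\ all (pred1 i3) s).
Proof.
(* v != 0 is automatic: L(a) != 0 for a root a. *)
move=> _ va root_a; have [La_ge0 | La_lt0] := lerP 0 (qL a).
  have a_root : positive_root a.
    by move: root_a; rewrite /is_root La_ge0 => /root_pos_positive_root.
  have tree_a x : in_Aorbit v x -> apollonian_tree a x := orbit_tree a_root va.
  split; [split | split].
  - exact: positive_root_reduced.
  - by move=> b /tree_a /tree_reduced; apply.
  - by left=> x /tree_a /(tree_qL_gt0 a_root).
  - move=> _ x /tree_a /(tree_red_run a_root) /(_ 1%g).
    by rewrite row_perm1.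
have [red_a a_root] := negative_root La_lt0 root_a.
have tree_a x : in_Aorbit v x -> apollonian_tree (- a) (- x).
  by move=> vx; exact: (orbit_tree a_root (in_AorbitN va) (in_AorbitN vx)).
split; [split => // | split].
- by move=> b /tree_a /tree_reduced eq_ba /reducedN /eq_ba /oppr_inj.
- by right=> x /tree_a /(tree_qL_gt0 a_root); rewrite qLN oppr_gt0.
- by move=> L_gt0; have := L_gt0 a va; rewrite ltNge ltW.
Qed.
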